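(* Let $\mathcal{E}^\ell$ be a left (resp. right) simple infinitesimal earthquake along a geodesic $\ell$ of $\mathbb{H}^2$, and let $S_1,S_2$ be two strata of the lamination $\{\ell\}$. Let $Y=\mathrm{Comp}(S_1,S_2)=K_{S_2}-K_{S_1}=\Lambda(\sigma)$ be the comparison Killing field, and let $\phi_Y(\eta)=\langle(1,\eta),\sigma\rangle$ for $\eta\in\overline{\mathbb{D}^2}$ (on $\mathbb{S}^1$ this is the support function of $Y$). Then $\phi_Y(x)\ge0$ (resp. $\phi_Y(x)\le0$) for every $x$ in the closure $\overline{S_2}\subset\overline{\mathbb{D}^2}$, and $\phi_Y(x)\le0$ (resp. $\phi_Y(x)\ge0$) for every $x\in\overline{S_1}$.
   Context: $\mathbb{R}^{1,2}$ is $\mathbb{R}^3$ with $\langle x,y\rangle=-x_0y_0+x_1y_1+x_2y_2$; $\mathbb{H}^2$ is identified with the Klein disk $\mathbb{D}^2$ (boundary $\mathbb{S}^1$) via $\Pi(x_0,x_1,x_2)=(x_1/x_0,x_2/x_0)$. Killing fields: $\Lambda(\sigma):\eta\mapsto\mathrm{d}_{(1,\eta)}\Pi((1,\eta)\boxtimes\sigma)$ with $\langle x\boxtimes y,v\rangle=\det(x,y,v)$; hyperbolic if $\langle\sigma,\sigma\rangle>0$, axis $\Pi(\mathbb{H}^2\cap\sigma^\perp)$. The support function of a vector field $Y$ on $\mathbb{S}^1$ is $\phi_Y$ with $Y(z)=iz\phi_Y(z)$; for $Y=\Lambda(\sigma)$ it equals $z\mapsto\langle(1,z),\sigma\rangle$.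 A simple infinitesimal earthquake along $\ell$ is an infinitesimal earthquake along the lamination $\{\ell\}$, whose strata are $\ell$ and the two components of $\mathbb{D}^2\setminus\ell$. A left (resp. right) infinitesimal earthquake along a lamination: a vector field on $\mathbb{H}^2$ equal on each stratum $S$ to a Killing field $K_S$, such that for strata $S,S'$, $\mathfrak{a}=K_{S'}-K_S$ vanishes only if one of $S,S'$ is in the closure of the other, and otherwise is hyperbolic with axis $\ell'$ weakly separating $S,S'$ and translating to the left (resp. right) seen from $S$ to $S'$ (for an arc $c$ from $S$ to $S'$ crossing $\ell'$ once at $x_0=c(t_0)$ and $w$ tangent to $\ell'$ at $x_0$ pointing towards $\exp(t\mathfrak{a})x_0$, $t>0$, $(c'(t_0),w)$ is positively, resp. negatively, oriented). *)

From HB Require Import structures.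
From mathcomp Require Import all_boot all_order all_algebra.
From mathcomp Require Import all_classical all_reals all_analysis.
Set Implicit Arguments. Unset Strict Implicit. Unset Printing Implicit Defensive.
Import Order.TTheory GRing.Theory Num.Theory.
Import numFieldNormedType.Exports.
Local Open Scope classical_set_scope.
Local Open Scope ring_scope.

(* R^{1,2}: row vectors of length 3; the plane R^2 (containing the Klein disk). *)
Notation vec3 R := ('rV[R]_3) (only parsing).
Notation vec2 R := ('rV[R]_2) (only parsing).

Section Hyp.
Variable R : realType.
Local Notation vec3 := ('rV[R]_3) (only parsing).
Local Notation vec2 := ('rV[R]_2) (only parsing).

Definition mdot (x y : vec3) : R :=
  - (x 0 0 * y 0 0) + x 0 1 * y 0 1 + x 0 2 * y 0 2.

(* the 3x3 matrix with rows x, y, v  (det of rows = det of columns) *)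
Definition mat3 (x y v : vec3) : 'M[R]_3 :=
  \matrix_(i < 3, j < 3)
    (if (i : nat) == 0%N then x 0 j else if (i : nat) == 1%N then y 0 j else v 0 j).

Definition evec (j : 'I_3) : vec3 := \row_(k < 3) ((k == j)%:R).

(* x ⊠ y : the unique vector with <x ⊠ y, v> = det(x,y,v) for all v;
   its j-th coordinate is eps_j det(x,y,e_j) with eps = (-1,1,1). *)
Definition mcross (x y : vec3) : vec3 :=
  \row_(j < 3) ((if (j : nat) == 0%N then -1 else 1) * \det (mat3 x y (evec j))).

Definition lift1 (eta : vec2) : vec3 :=
  \row_(j < 3) (if (j : nat) == 0%N then 1 else eta 0 (inord j.-1)).

Definition Pi (x : vec3) : vec2 := \row_(j < 2) (x 0 (inord j.+1) / x 0 0).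

Definition dPi (p v : vec3) : vec2 :=
  \row_(j < 2) ((v 0 (inord j.+1) * p 0 0 - p 0 (inord j.+1) * v 0 0) / (p 0 0 ^+ 2)).

Definition Lambda (sigma : vec3) (eta : vec2) : vec2 :=
  dPi (lift1 eta) (mcross (lift1 eta) sigma).

(* hyperboloid model H^2 (upper sheet) and Klein disk D^2 *)
Definition H2 : set vec3 := [set x | mdot x x = -1 /\ 0 < x 0 0].
Definition D2 : set vec2 := [set eta | eta 0 0 ^+ 2 + eta 0 1 ^+ 2 < 1].

Definition hyperbolic (sigma : vec3) : Prop := 0 < mdot sigma sigma.

Definition axis (sigma : vec3) : set vec2 :=
  Pi @` [set x | H2 x /\ mdot x sigma = 0].

Definition geodesic (l : set vec2) : Prop :=
  exists tau : vec3, hyperbolic tau /\ l = axis tau.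

Definition component (A : set vec2) (C : set vec2) : Prop :=
  exists x, A x /\ C = connected_component A x.

Definition strata (l : set vec2) : set (set vec2) :=
  [set S | S = l \/ component (D2 `\` l) S].

Definition weakly_separates (l' S S' : set vec2) : Prop :=
  exists C C', [/\ component (D2 `\` l') C, component (D2 `\` l') C', C <> C',
                   S `<=` closure C & S' `<=` closure C'].

Definition det2 (u w : vec2) : R := u 0 0 * w 0 1 - u 0 1 * w 0 0.

Definition sgnb (b : bool) : R := if b then 1 else -1.

(* Translation of the hyperbolic field a (axis l') to the left (b = true),
   resp. right (b = false), seen from S to S': for every geodesic arc
   c(t) = (1-t) p + t q (t in [0,1]) from p in S to q in S' meeting l' exactly
   once, at x0 = c(t0), the pair (c'(t0), w) is positively (resp. negatively)
   oriented, where w is tangent to l' at x0 pointing towards exp(t a) x0, t > 0,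
   i.e. w is the velocity Lambda(a)(x0) of the flow. *)
Definition seg (p q : vec2) (t : R) : vec2 := (1 - t) *: p + t *: q.

Definition translates (b : bool) (a : vec3) (S S' : set vec2) : Prop :=
  forall p q t0, S p -> S' q -> 0 <= t0 <= 1 ->
    (forall t, 0 <= t <= 1 -> axis a (seg p q t) -> t = t0) ->
    axis a (seg p q t0) ->
    0 < sgnb b * det2 (q - p) (Lambda a (seg p q t0)).

(* A left (b = true) / right (b = false) simple infinitesimal earthquake along l:
   a vector field E on D^2 together with the Killing fields K S = Lambda (sig S)
   of the strata. *)
Definition simple_inf_earthquake (b : bool) (l : set vec2) (E : vec2 -> vec2)
    (sig : set vec2 -> vec3) : Prop :=
  [/\ geodesic l,
      (forall S, strata l S -> forall eta, S eta -> E eta = Lambda (sig S) eta) &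
      (forall S S', strata l S -> strata l S' ->
         let a := sig S' - sig S in
         (a = 0 -> S `<=` closure S' \/ S' `<=` closure S) /\
         (a <> 0 -> [/\ hyperbolic a, weakly_separates (axis a) S S'
                        & translates b a S S']))].

End Hyp.

(* On the Klein disk the support function phi(eta) = <(1,eta), sigma> of the
   Killing field Lambda(sigma) is affine and vanishes exactly on the axis of
   sigma, so the components of D^2 minus the axis are the two open half-disks
   where phi is positive, resp. negative, and phi has a weak constant sign on
   the closure of each.  Weak separation puts S1 and S2 in the closures of
   opposite half-disks; which is which is decided by the direction of
   translation: on a segment from p in S1 to q in S2 crossing the axis at x0,
   det(q - p, Lambda(sigma)(x0)) = (1 - |x0|^2) (phi(q) - phi(p)), so a left
   (resp. right) earthquake makes phi increase (resp. decrease) from S1 to S2. *)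

From HB Require Import structures.
From mathcomp Require Import all_boot all_order all_algebra.
From mathcomp Require Import all_classical all_reals all_analysis.
From mathcomp Require Import ring lra.
Import Order.TTheory GRing.Theory Num.Theory.
Import numFieldNormedType.Exports.
Local Open Scope classical_set_scope.
Local Open Scope ring_scope.

Section KleinModel.
Set Implicit Arguments.
Variable R : realType.
Implicit Types (a x : 'rV[R]_3) (p q y z u : 'rV[R]_2) (c : bool) (k t : R).

Lemma rV2P p q : p 0 0 = q 0 0 -> p 0 1 = q 0 1 -> p = q.
Proof.
move=> e0 e1; apply/rowP => -[[|[|//]] j2].
- by rewrite (_ : Ordinal j2 = 0) //; apply: val_inj.
- by rewrite (_ : Ordinal j2 = 1) //; apply: val_inj.
Qed.

Lemma rV3P a x : a 0 0 = x 0 0 -> a 0 1 = x 0 1 -> a 0 2 = x 0 2 -> a = x.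
Proof.
move=> e0 e1 e2; apply/rowP => -[[|[|[|//]]] j3].
- by rewrite (_ : Ordinal j3 = 0) //; apply: val_inj.
- by rewrite (_ : Ordinal j3 = 1) //; apply: val_inj.
- by rewrite (_ : Ordinal j3 = 2) //; apply: val_inj.
Qed.

Lemma inordE n (i : 'I_n.+1) (k : nat) : k = i -> inord k = i.
Proof. by move->; rewrite inord_val. Qed.

Lemma lift1E z : [/\ lift1 z 0 0 = 1, lift1 z 0 1 = z 0 0 & lift1 z 0 2 = z 0 1].
Proof. by rewrite !mxE /= !(@inordE _ 0 0) // (@inordE _ 1 1). Qed.

Lemma PiE x : Pi x 0 0 = x 0 1 / x 0 0 /\ Pi x 0 1 = x 0 2 / x 0 0.
Proof. by rewrite !mxE /= (@inordE _ 1 1) // (@inordE _ 2 2). Qed.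

Lemma det_mx33 (A : 'M[R]_3) : \det A =
  A 0 0 * (A 1 1 * A 2 2 - A 1 2 * A 2 1) - A 0 1 * (A 1 0 * A 2 2 - A 1 2 * A 2 0)
  + A 0 2 * (A 1 0 * A 2 1 - A 1 1 * A 2 0).
Proof.
rewrite (expand_det_row _ 0) !big_ord_recl big_ord0 /cofactor.
rewrite !(expand_det_row _ 0) !big_ord_recl !big_ord0 /cofactor !det_mx11 !mxE /=.
have liftE n (i : 'I_n.+1) (j : 'I_n) : lift i j = inord (bump i j).
  by apply/val_inj; rewrite /= inordK // (ltn_ord (lift i j)).
rewrite !liftE /bump /= !inordK //=.
rewrite !(@inordE _ 0 0) // !(@inordE _ 1 1) // !(@inordE _ 2 2) //.
by rewrite !expr0 !expr1; ring.
Qed.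

Lemma mdotr0 x : mdot x 0 = 0.
Proof. by rewrite /mdot !mxE; ring. Qed.

Lemma mdotZl k x a : mdot (k *: x) a = k * mdot x a.
Proof. by rewrite /mdot !mxE; ring. Qed.

Lemma mdotZr k x a : mdot x (k *: a) = k * mdot x a.
Proof. by rewrite /mdot !mxE; ring. Qed.

Lemma mdot_lift1 z : mdot (lift1 z) (lift1 z) = z 0 0 ^+ 2 + z 0 1 ^+ 2 - 1.
Proof. by rewrite /mdot; have [-> -> ->] := lift1E z; ring. Qed.

(** [phi a] is the support function [phi_Y] of [Y = Lambda a], on the whole plane. *)
Definition phi a z := mdot (lift1 z) a.

Lemma phiE a z : phi a z = - a 0 0 + z 0 0 * a 0 1 + z 0 1 * a 0 2.
Proof. by rewrite /phi /mdot; have [-> -> ->] := lift1E z; rewrite mul1r. Qed.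

Lemma det2_Lambda a z u : det2 u (Lambda a z) =
  (1 - z 0 0 ^+ 2 - z 0 1 ^+ 2) * (u 0 0 * a 0 1 + u 0 1 * a 0 2)
  + phi a z * (z 0 0 * u 0 0 + z 0 1 * u 0 1).
Proof.
rewrite phiE /det2 /Lambda /dPi /mcross !mxE /= !det_mx33 /mat3 /evec !mxE /=.
rewrite !(@inordE _ 0 0) // !(@inordE _ 1 1) // !(@inordE _ 2 2) //=.
by rewrite !(@inordE _ 0 0) // !(@inordE _ 1 1) // expr1n !divr1; ring.
Qed.

Lemma lift1_Pi x : x 0 0 != 0 -> lift1 (Pi x) = (x 0 0)^-1 *: x.
Proof.
move=> x0; have [l0 l1 l2] := lift1E (Pi x); have [P0 P1] := PiE x.
by apply: rV3P; rewrite ?l0 ?l1 ?l2 ?P0 ?P1 !mxE ?mulVf // mulrC.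
Qed.

Lemma Pi_scale_lift1 k z : k != 0 -> Pi (k *: lift1 z) = z.
Proof.
move=> k0; have [P0 P1] := PiE (k *: lift1 z); have [l0 l1 l2] := lift1E z.
by apply: rV2P;
  rewrite ?P0 ?P1 ![(k *: lift1 z) _ _]mxE ?l0 ?l1 ?l2 mulr1 mulrAC mulfV ?mul1r.
Qed.

Lemma axisP a z : axis a z <-> D2 z /\ phi a z = 0.
Proof.
split=> [[x [[xx x0] xa] <-]|[Dz za]].
  have x0n : x 0 0 != 0 by rewrite gt_eqF.
  rewrite /phi lift1_Pi // mdotZl xa mulr0; split=> //.
  have := mdot_lift1 (Pi x); rewrite lift1_Pi // mdotZl mdotZr xx /D2 /=.
  have : 0 < (x 0 0)^-1 * (x 0 0)^-1 by rewrite mulr_gt0 ?invr_gt0.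
  lra.
have s2E : Num.sqrt (1 - z 0 0 ^+ 2 - z 0 1 ^+ 2) ^+ 2 = 1 - z 0 0 ^+ 2 - z 0 1 ^+ 2.
  by rewrite sqr_sqrtr //; move: Dz; rewrite /D2 /=; lra.
set s := Num.sqrt _ in s2E.
have s0 : 0 < s by rewrite sqrtr_gt0; move: Dz; rewrite /D2 /=; lra.
exists (s^-1 *: lift1 z); last by rewrite Pi_scale_lift1 // invr_eq0 gt_eqF.
have [l0 _ _] := lift1E z.
split; last by rewrite mdotZl -/(phi a z) za mulr0.
split; last by rewrite mxE l0 mulr1 invr_gt0.
rewrite mdotZl mdotZr mdot_lift1 mulrA -expr2 exprVn.
have -> : z 0 0 ^+ 2 + z 0 1 ^+ 2 - 1 = - s ^+ 2 by rewrite s2E; ring.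
by rewrite mulrN mulVf // expf_neq0 // gt_eqF.
Qed.

Lemma axis_nonempty a : hyperbolic a -> exists z, axis a z.
Proof.
rewrite /hyperbolic /mdot => ha.
set n := a 0 1 * a 0 1 + a 0 2 * a 0 2.
have n0 : 0 < n by have := sqr_ge0 (a 0 0); rewrite expr2 /n; lra.
pose z := \row_(j < 2) (a 0 0 / n * a 0 (inord j.+1)).
have [z0 z1] : z 0 0 = a 0 0 / n * a 0 1 /\ z 0 1 = a 0 0 / n * a 0 2.
  by rewrite !mxE /= (@inordE _ 1 1) // (@inordE _ 2 2).
exists z; apply/axisP; rewrite /D2 /= phiE z0 z1; split.
  have -> : (a 0 0 / n * a 0 1) ^+ 2 + (a 0 0 / n * a 0 2) ^+ 2 = a 0 0 ^+ 2 / n.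
    by move: (lt0r_neq0 n0); rewrite /n => n_neq0; field.
  by rewrite ltr_pdivrMr // mul1r /n; lra.
transitivity (- a 0 0 + a 0 0 / n * n); first by rewrite /n; ring.
by rewrite divfK ?lt0r_neq0 // addNr.
Qed.

Lemma phi_continuous a : continuous (phi a).
Proof.
move=> z.
have -> : phi a = (fun=> - a 0 0) + ((fun w : 'rV[R]_2 => w 0 0) \* (fun=> a 0 1))
   + ((fun w : 'rV[R]_2 => w 0 1) \* (fun=> a 0 2)).
  by apply/funext => w; rewrite phiE.
by do 2?apply: continuousD; do ?apply: continuousM;
  do ?[exact: cst_continuous | exact: coord_continuous].
Qed.

Lemma seg_continuous p q : continuous (seg p q).
Proof.
have -> : seg p q = (fun t => (1 - t) *: p) + (fun t => t *: q) by [].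
move=> t; apply: continuousD; apply: continuousZr_tmp; last exact: cvg_id.
exact: (@continuousB _ R^o _ (cst 1) id t (@cst_continuous _ _ _ t) cvg_id).
Qed.

Lemma phi_seg a p q t : phi a (seg p q t) = (1 - t) * phi a p + t * phi a q.
Proof. by rewrite !phiE /seg !mxE; ring. Qed.

Lemma D2_seg p q t : D2 p -> D2 q -> 0 <= t <= 1 -> D2 (seg p q t).
Proof.
rewrite /D2 /seg /= !mxE => Dp Dq /andP[t0 t1].
have convex : ((1 - t) * p 0 0 + t * q 0 0) ^+ 2 + ((1 - t) * p 0 1 + t * q 0 1) ^+ 2
  = (1 - t) * (p 0 0 ^+ 2 + p 0 1 ^+ 2) + t * (q 0 0 ^+ 2 + q 0 1 ^+ 2)
    - t * (1 - t) * ((p 0 0 - q 0 0) ^+ 2 + (p 0 1 - q 0 1) ^+ 2) by ring.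
rewrite convex; set P := p 0 0 ^+ 2 + _ in Dp *; set Q := q 0 0 ^+ 2 + _ in Dq *.
set d := (_ - _) ^+ 2 + _.
have d0 : 0 <= d by rewrite addr_ge0 ?sqr_ge0.
have : 0 <= t * (1 - t) * d by rewrite !mulr_ge0 // subr_ge0.
have [PQ|/ltW QP] := leP P Q.
  suff : 0 <= (1 - t) * (Q - P) by lra.
  by rewrite mulr_ge0 ?subr_ge0.
suff : 0 <= t * (P - Q) by lra.
by rewrite mulr_ge0 ?subr_ge0.
Qed.

(* The two components of [D2] minus the axis of [a], indexed by the sign of [phi a]. *)
Definition side a c := [set z | D2 z /\ 0 < sgnb R c * phi a z].

Lemma sgnb_neq0 c : sgnb R c != 0.
Proof. by case: c; rewrite /sgnb ?oppr_eq0 oner_eq0. Qed.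

Lemma sgnbN c : sgnb R (~~ c) = - sgnb R c.
Proof. by case: c; rewrite /sgnb ?opprK. Qed.

Lemma sgnb_opp b c k : 0 < sgnb R b * k -> sgnb R c * k < 0 -> c = ~~ b.
Proof. by case: b c => [] []; rewrite /sgnb //=; lra. Qed.

Lemma sgnb_phi_continuous a c : continuous (fun z => sgnb R c * phi a z).
Proof.
by move=> z; apply: (@continuousM _ _ (cst _));
  [exact: cst_continuous | exact: phi_continuous].
Qed.

Lemma side_sub a c : side a c `<=` @D2 R `\` axis a.
Proof. by move=> z [Dz za]; split=> // /axisP[_ z0]; rewrite z0 mulr0 ltxx in za. Qed.

Lemma side_seg a c y z t : side a c y -> side a c z -> 0 <= t <= 1 ->
  side a c (seg y z t).
Proof.
move=> [Dy ya] [Dz za] t01; split; first exact: D2_seg.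
have -> : sgnb R c * phi a (seg y z t)
    = (1 - t) * (sgnb R c * phi a y) + t * (sgnb R c * phi a z) by rewrite phi_seg; ring.
move: t01 => /andP[t0 t1].
have [->|t_neq0] := eqVneq t 0; first by rewrite subr0 !mul1r mul0r addr0.
have t_gt0 : 0 < t by rewrite lt0r t_neq0.
by rewrite ltr_wpDl ?(mulr_gt0 t_gt0 za) // mulr_ge0 ?subr_ge0 ?(ltW ya).
Qed.

Lemma connected_component_side a c y : side a c y ->
  connected_component (@D2 R `\` axis a) y = side a c.
Proof.
move=> yS; apply/seteqP; split=> [z Cz|z zS].
  have [Dz z_axis] := connected_component_sub Cz; split=> //.
  rewrite ltNge; apply/negP => z_le0.
  have /connected_intervalP gI := connected_continuous_connected
    (@component_connected _ (@D2 R `\` axis a) y)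
    (continuous_subspaceT (sgnb_phi_continuous a c)).
  have := gI _ _ (ex_intro2 _ _ z Cz erefl)
    (ex_intro2 _ _ y (connected_component_refl (side_sub yS)) erefl) 0.
  rewrite z_le0 (ltW yS.2) => /(_ isT)[w Cw /eqP].
  rewrite mulf_eq0 (negbTE (sgnb_neq0 c)) => /eqP w0.
  have [Dw w_axis] := connected_component_sub Cw.
  by apply: w_axis; apply/axisP.
have in01 (t : R) : t = 0 \/ t = 1 -> `[0, 1]%classic t.
  by case=> ->; rewrite /= in_itv /= lexx ler01.
apply: (@connected_component_max _ _ (seg y z @` `[0, 1]%classic) y).
- by exists 0; [apply: in01; left | rewrite /seg subr0 scale0r addr0 scale1r].
- move=> _ [t t01 <-]; apply: (@side_sub a c).
  by apply: side_seg; move: t01; rewrite /= in_itv.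
- exact: connected_continuous_connected (@segment_connected R 0 1)
    (continuous_subspaceT (@seg_continuous y z)).
- by exists 1; [apply: in01; right | rewrite /seg subrr scale0r add0r scale1r].
Qed.

Lemma component_side a C : component (@D2 R `\` axis a) C -> exists c, C = side a c.
Proof.
move=> [y [[Dy y_axis] ->]]; exists (0 < phi a y).
apply: connected_component_side; split=> //.
have y_neq0 : phi a y != 0 by apply: contra_not_neq y_axis => y0; apply/axisP.
rewrite /sgnb; have [|y_le0] := ltP 0 (phi a y); first by rewrite mul1r.
by rewrite mulN1r oppr_gt0 lt_neqAle y_neq0.
Qed.

Lemma closure_side_sub a c A : A `<=` closure (side a c) ->
  closure A `<=` [set z | 0 <= sgnb R c * phi a z].
Proof.
move=> A_sub; set B := [set z | _].
have B_closed : closed B.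
  apply: (preimage_closed (D := [set r : R | 0 <= r])); last exact: closed_ge.
  by move=> z _; exact: sgnb_phi_continuous.
rewrite (closure_id B).1 //; apply: subset_trans (closureS A_sub) _.
rewrite -(closure_id _).1; last exact: closed_closure.
by apply: closureS => z [_ /ltW].
Qed.

Lemma open_D2 : open (@D2 R).
Proof.
pose f i (z : 'rV[R]_2) := z 0 i.
have -> : @D2 R = (f 0 \* f 0 + f 1 \* f 1) @^-1` [set r | r < 1] by [].
apply: open_comp; last exact: open_lt.
by move=> z _; apply: continuousD; apply: continuousM; exact: coord_continuous.
Qed.

Lemma open_side a c : open (side a c).
Proof.
apply: openI; first exact: open_D2.
apply: (open_comp (D := [set r : R | 0 < r])); last exact: open_gt.
by move=> z _; exact: sgnb_phi_continuous.
Qed.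

Lemma open_phi_eq0 a U y : open U -> U y -> (forall z, U z -> phi a z = 0) -> a = 0.
Proof.
move=> U_open Uy U0.
have slope (v : 'rV[R]_2) : v 0 0 * a 0 1 + v 0 1 * a 0 2 = 0.
  have cont : {for 0, continuous (cst y + (fun t : R => t *: v))}.
    by apply: continuousD; [exact: cst_continuous | apply: continuousZr_tmp; exact: cvg_id].
  have /nbhs_dnbhs U_near : \forall t \near (0 : R), U (y + t *: v).
    apply: cont; change (nbhs (y + 0 *: v) U); rewrite scale0r addr0.
    exact: open_nbhs_nbhs.
  have [t [/U0 yt0 t_neq0]] : exists t : R, U (y + t *: v) /\ t != 0.
    near (0 : R)^' => t.
    by exists t; split; near: t; [exact: U_near | exact: nbhs_dnbhs_neq].
  have : t * (v 0 0 * a 0 1 + v 0 1 * a 0 2) = phi a (y + t *: v) - phi a y.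
    by rewrite !phiE !mxE; ring.
  by rewrite yt0 (U0 _ Uy) subrr => /eqP; rewrite mulf_eq0 (negbTE t_neq0) => /eqP.
have a1 : a 0 1 = 0 by have := slope (delta_mx 0 0); rewrite !mxE /= mul1r mul0r addr0.
have a2 : a 0 2 = 0 by have := slope (delta_mx 0 1); rewrite !mxE /= mul1r mul0r add0r.
have := U0 _ Uy; rewrite phiE a1 a2 !mulr0 !addr0 => /eqP; rewrite oppr_eq0 => /eqP a0.
by apply: rV3P; rewrite mxE.
Unshelve. all: by end_near.
Qed.

Lemma component_phi_neq0 tau a C : a != 0 -> component (@D2 R `\` axis tau) C ->
  exists2 z, C z & phi a z != 0.
Proof.
move=> a_neq0 cC; have [c CE] := component_side cC.
have [y [Dy C_def]] := cC.
have Cy : C y by rewrite C_def; exact: connected_component_refl.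
apply: contrapT => no_z; move/eqP: a_neq0; apply.
apply: (@open_phi_eq0 a C y _ Cy); first by rewrite CE; exact: open_side.
by move=> z Cz; apply/eqP/negPn/negP => z_neq0; apply: no_z; exists z.
Qed.

Lemma strata_sub_D2 tau S : strata (axis tau) S -> S `<=` @D2 R.
Proof. by case=> [-> z /axisP[] | [y [_ ->]] z /connected_component_sub[]]. Qed.

Lemma strata_nonempty tau S : hyperbolic tau -> strata (axis tau) S -> exists z, S z.
Proof.
move=> htau [->|[y [Dy ->]]]; first exact: axis_nonempty.
by exists y; apply: connected_component_refl.
Qed.

Lemma strata_phi_neq0 tau a S1 S2 : hyperbolic tau ->
  strata (axis tau) S1 -> strata (axis tau) S2 -> S1 <> S2 -> a != 0 ->
  exists p q, [/\ S1 p, S2 q & phi a p != 0 \/ phi a q != 0].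
Proof.
move=> htau hS1 hS2 S12 a_neq0.
have [p S1p] := strata_nonempty htau hS1; have [q S2q] := strata_nonempty htau hS2.
case: hS1 => [S1E|cS1]; last first.
  have [p' S1p' p'_neq0] := component_phi_neq0 _ a_neq0 cS1.
  by exists p', q; split=> //; left.
case: hS2 => [S2E|cS2]; first by rewrite S1E S2E in S12.
have [q' S2q' q'_neq0] := component_phi_neq0 _ a_neq0 cS2.
by exists p, q'; split=> //; right.
Qed.

(* The segment from p to q crosses the axis of a once, at x0, where
   [det2 (q - p) (Lambda a x0) = (1 - |x0|^2) (phi a q - phi a p)]. *)
Lemma translates_side b c a S1 S2 p q : translates b a S1 S2 ->
  S1 p -> S2 q -> D2 p -> D2 q ->
  0 <= sgnb R c * phi a p -> 0 <= sgnb R (~~ c) * phi a q ->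
  phi a p != 0 \/ phi a q != 0 -> c = ~~ b.
Proof.
move=> tr S1p S2q Dp Dq; rewrite sgnbN mulNr oppr_ge0.
set u := sgnb R c * phi a p; set v := sgnb R c * phi a q => u_ge0 v_le0 pq_neq0.
have phi0 z : sgnb R c * phi a z = 0 -> phi a z = 0.
  by move/eqP; rewrite mulf_eq0 (negbTE (sgnb_neq0 c)) => /eqP.
have uv_gt0 : 0 < u - v.
  rewrite lt_def subr_ge0 (le_trans v_le0 u_ge0) andbT subr_eq0.
  by apply/eqP => uv; case: pq_neq0 => /eqP; apply; apply: phi0; rewrite -?/u -?/v; lra.
have u_seg t : sgnb R c * phi a (seg p q t) = u - t * (u - v) by rewrite phi_seg /u /v; ring.
set t0 := u / (u - v).
have t01 : 0 <= t0 <= 1.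
  by rewrite /t0 divr_ge0 ?(ltW uv_gt0) //= ler_pdivrMr // mul1r; lra.
have x0_phi : phi a (seg p q t0) = 0.
  by apply: phi0; rewrite u_seg divfK ?subrr ?lt0r_neq0.
have x0_axis : axis a (seg p q t0) by apply/axisP; split=> //; exact: D2_seg.
have x0_uniq t : 0 <= t <= 1 -> axis a (seg p q t) -> t = t0.
  move=> _ /axisP[_ /(congr1 (fun r => sgnb R c * r))]; rewrite mulr0 u_seg => /eqP.
  by rewrite subr_eq0 => /eqP ut; rewrite /t0 {1}ut mulfK ?lt0r_neq0.
have := tr p q t0 S1p S2q t01 x0_uniq x0_axis.
rewrite det2_Lambda x0_phi mul0r addr0.
have -> : (q - p) 0 0 * a 0 1 + (q - p) 0 1 * a 0 2 = phi a q - phi a p.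
  by rewrite !phiE !mxE; ring.
have := D2_seg _ Dp Dq t01; rewrite /D2 /= => x0_D2.
rewrite mulrCA pmulr_rgt0; last by lra.
by move/sgnb_opp; apply; rewrite mulrBr -/u -/v; lra.
Qed.

End KleinModel.

Theorem lemma3p11 (R : realType) (b : bool) (l : set (vec2 R))
    (E : vec2 R -> vec2 R) (sig : set (vec2 R) -> vec3 R)
    (S1 S2 : set (vec2 R)) :
  simple_inf_earthquake b l E sig ->
  strata l S1 -> strata l S2 ->
  let sigma := sig S2 - sig S1 in
  (forall x, closure S2 x -> 0 <= sgnb R b * mdot (lift1 x) sigma) /\
  (forall x, closure S1 x -> sgnb R b * mdot (lift1 x) sigma <= 0).
Proof.
move=> [[tau [htau ->]] _ hsig] hS1 hS2 sigma.
have [->|sigma_neq0] := eqVneq sigma 0; first by split=> x _; rewrite mdotr0 mulr0.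
have [_ /(_ (elimN eqP sigma_neq0))] := hsig S1 S2 hS1 hS2; rewrite -/sigma.
move=> [_ [C1 [C2 [cC1 cC2 C12 S1C1 S2C2]]] tr].
have [c1 C1E] := component_side cC1; have [c2 C2E] := component_side cC2.
have c2E : c2 = ~~ c1 by move: C12; rewrite C1E C2E; case: (c1) (c2) => [] [].
move: S1C1 S2C2; rewrite C1E C2E c2E => /closure_side_sub cl1 /closure_side_sub cl2.
have S12 : S1 <> S2 by move=> S12; rewrite /sigma S12 subrr eqxx in sigma_neq0.
have [p [q [S1p S2q pq_neq0]]] := strata_phi_neq0 _ htau hS1 hS2 S12 sigma_neq0.
have c1E : c1 = ~~ b.
  apply: (translates_side _ tr S1p S2q) => //.
  - exact: strata_sub_D2 hS1 _ S1p.
  - exact: strata_sub_D2 hS2 _ S2q.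
  - exact: cl1 _ (subset_closure S1p).
  - exact: cl2 _ (subset_closure S2q).
rewrite c1E negbK in cl1 cl2.
split=> x; first exact: cl2.
by move=> /cl1 /=; rewrite sgnbN mulNr oppr_ge0.
Qed.
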